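(* Under the standing assumptions, let $\rho_{k+1}\ge\rho_k>0$ and $\sigma_k\ge\sigma_{k+1}>0$. Then for every $x\in X$, $$\|y^*_{\rho_{k+1},\sigma_{k+1}}(x)-y^*_{\rho_k,\sigma_k}(x)\|\le\frac{\rho_{k+1}-\rho_k}{\sigma_k}M^2+\frac{\sigma_k-\sigma_{k+1}}{\sigma_k}M .$$
   Context: Standing assumptions: $X\subset\mathbb{R}^n$, $Y\subset\mathbb{R}^m$ nonempty, convex, compact; $f$ continuously differentiable with Lipschitz gradient on $X\times Y$, $f(x,\cdot)$ concave on $Y$; $c=(c_1,\dots,c_p)$ with continuously differentiable components having Lipschitz gradients, each $c_i(x,\cdot)$ convex on $Y$. Notation: $[z]_+=\max\{z,0\}$ componentwise; $\psi_{\rho,\sigma}(x,y):=f(x,y)-\frac{\rho}{2}\|[c(x,y)]_+\|^2-\frac{\sigma}{2}\|y\|^2$; $y^*_{\rho,\sigma}(x)$ is the unique maximizer of $\psi_{\rho,\sigma}(x,\cdot)$ over $Y$. $M$ is any constant with $M\ge\sup_{X\times Y}\|c(x,y)\|$, $M\ge\sup_{X\times Y}\|\nabla c(x,y)\|$ (operator norm of the Jacobian of $c$) and $M\ge\sup_{y\in Y}\|y\|$. *)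

From HB Require Import structures.
From mathcomp Require Import all_boot all_order all_algebra.
From mathcomp Require Import all_classical all_reals all_analysis.
Set Implicit Arguments. Unset Strict Implicit. Unset Printing Implicit Defensive.
Import Order.TTheory GRing.Theory Num.Theory.
Import numFieldNormedType.Exports.
Local Open Scope classical_set_scope.
Local Open Scope ring_scope.

(* Euclidean norm on row vectors (the library's norm on 'rV is the max norm). *)
Definition enorm {R : realType} {k : nat} (v : 'rV[R]_k) : R :=
  Num.sqrt (\sum_(i < k) (v ord0 i) ^+ 2).

Definition pospart {R : realType} {k : nat} (v : 'rV[R]_k) : 'rV[R]_k :=
  map_mx (fun a => Num.max a 0) v.

Definition cvx_set {R : realType} {k : nat} (A : set 'rV[R]_k) : Prop :=
  forall u v, A u -> A v -> forall t : R, 0 <= t <= 1 ->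
    A (t *: u + (1 - t) *: v).

Definition concave_on {R : realType} {k : nat} (A : set 'rV[R]_k)
  (g : 'rV[R]_k -> R) : Prop :=
  forall u v, A u -> A v -> forall t : R, 0 <= t <= 1 ->
    t * g u + (1 - t) * g v <= g (t *: u + (1 - t) *: v).

Definition convex_on {R : realType} {k : nat} (A : set 'rV[R]_k)
  (g : 'rV[R]_k -> R) : Prop :=
  forall u v, A u -> A v -> forall t : R, 0 <= t <= 1 ->
    g (t *: u + (1 - t) *: v) <= t * g u + (1 - t) * g v.

Definition joint {R : realType} {n m : nat} {T : Type}
  (g : 'rV[R]_n -> 'rV[R]_m -> T) : 'rV[R]_(n + m) -> T :=
  fun z => g (lsubmx z) (rsubmx z).

Definition prodset {R : realType} {n m : nat} (X : set 'rV[R]_n)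
  (Y : set 'rV[R]_m) : set 'rV[R]_(n + m) :=
  [set z | X (lsubmx z) /\ Y (rsubmx z)].

Definition C11_on {R : realType} {k : nat} (A : set 'rV[R]_k)
  (g : 'rV[R]_k -> R) : Prop :=
  (forall z, A z -> differentiable g z) /\
  exists L : R, forall z1 z2, A z1 -> A z2 -> forall v : 'rV[R]_k,
    `|'d g z1 v - 'd g z2 v| <= L * enorm (z1 - z2) * enorm v.

Definition psi {R : realType} {n m p : nat}
  (f : 'rV[R]_n -> 'rV[R]_m -> R) (c : 'rV[R]_n -> 'rV[R]_m -> 'rV[R]_p)
  (rho sigma : R) (x : 'rV[R]_n) (y : 'rV[R]_m) : R :=
  f x y - rho / 2 * (enorm (pospart (c x y))) ^+ 2 - sigma / 2 * (enorm y) ^+ 2.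

Definition is_ystar {R : realType} {n m p : nat} (Y : set 'rV[R]_m)
  (f : 'rV[R]_n -> 'rV[R]_m -> R) (c : 'rV[R]_n -> 'rV[R]_m -> 'rV[R]_p)
  (rho sigma : R) (x : 'rV[R]_n) (y : 'rV[R]_m) : Prop :=
  Y y /\ forall y', Y y' -> psi f c rho sigma x y' <= psi f c rho sigma x y.

From HB Require Import structures.
From mathcomp Require Import all_boot all_order all_algebra.
From mathcomp Require Import all_classical all_reals all_analysis.
From mathcomp Require Import ring lra.
Import Order.TTheory GRing.Theory Num.Theory.
Import numFieldNormedType.Exports.
Local Open Scope classical_set_scope.
Local Open Scope ring_scope.
Set Implicit Arguments. Unset Strict Implicit.

(* Write psi_k, psi_k1 for the two penalized objectives, y_k, y_k1 for their
   maximizers, d = |y_k - y_k1| and y_t = y_k1 + t (y_k - y_k1), 0 < t <= 1.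
   Since f(x,.) is concave and ||[c(x,.)]_+||^2 convex, psi_k is
   sigma_k-strongly concave; comparing y_t with y_k for psi_k and with y_k1
   for psi_k1 gives
     sigma_k t (1 - t) d^2 <= (psi_k - psi_k1)(y_t) - (psi_k - psi_k1)(y_k1),
   and the right-hand side is at most
     (rho_k1 - rho_k) M |c(x,y_t) - c(x,y_k1)| + (sigma_k - sigma_k1) M t d.
   Dividing by t and letting t -> 0, the difference quotient of c is bounded
   by the Jacobian bound M d, whence sigma_k d^2 <= L d with L the numerator
   of the claimed bound.  Using the derivative at t = 0, rather than adding
   the two optimality gaps, is what yields sigma_k instead of
   (sigma_k + sigma_k1) / 2 in the denominator. *)

Section EuclideanNorm.
Variable R : realType.
Implicit Types (k : nat).

Definition rdot k (u v : 'rV[R]_k) : R := \sum_(i < k) u ord0 i * v ord0 i.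

Lemma enorm_ge0 k (u : 'rV[R]_k) : 0 <= enorm u.
Proof. exact: sqrtr_ge0. Qed.

Lemma sqr_enorm k (u : 'rV[R]_k) : enorm u ^+ 2 = \sum_(i < k) u ord0 i ^+ 2.
Proof. by rewrite sqr_sqrtr //; apply: sumr_ge0 => i _; rewrite sqr_ge0. Qed.

Lemma enormZ k (t : R) (u : 'rV[R]_k) : enorm (t *: u) = `|t| * enorm u.
Proof.
rewrite /enorm -sqrtr_sqr -sqrtrM ?sqr_ge0 //; congr Num.sqrt.
by rewrite mulr_sumr; apply: eq_bigr => i _; rewrite !mxE exprMn.
Qed.

Lemma enormN k (u : 'rV[R]_k) : enorm (- u) = enorm u.
Proof. by rewrite -scaleN1r enormZ normrN normr1 mul1r. Qed.

Lemma enormB k (u v : 'rV[R]_k) : enorm (u - v) = enorm (v - u).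
Proof. by rewrite -enormN opprB. Qed.

Lemma sqr_enormD k (u v : 'rV[R]_k) :
  enorm (u + v) ^+ 2 = enorm u ^+ 2 + 2 * rdot u v + enorm v ^+ 2.
Proof.
rewrite !sqr_enorm /rdot mulr_sumr -!big_split /=.
by apply: eq_bigr => i _; rewrite !mxE; ring.
Qed.

Lemma sqr_enorm_convex k (t : R) (u v : 'rV[R]_k) :
  enorm (t *: u + (1 - t) *: v) ^+ 2 =
  t * enorm u ^+ 2 + (1 - t) * enorm v ^+ 2 - t * (1 - t) * enorm (u - v) ^+ 2.
Proof.
rewrite !sqr_enorm !mulr_sumr -!big_split -sumrB /=.
by apply: eq_bigr => i _; rewrite !mxE; ring.
Qed.

Lemma rdot_le_enorm k (u v : 'rV[R]_k) : rdot u v <= enorm u * enorm v.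
Proof.
have [v0|vpos] := eqVneq (enorm v ^+ 2) 0.
  suff -> : rdot u v = 0 by rewrite mulr_ge0 ?enorm_ge0.
  move: v0; rewrite sqr_enorm => /eqP; rewrite psumr_eq0 => [/allP vi0|i _];
    last exact: sqr_ge0.
  rewrite /rdot big1 // => i _.
  by have /vi0 := mem_index_enum i; rewrite implyTb sqrf_eq0 => /eqP ->; rewrite mulr0.
have {}vpos : 0 < enorm v ^+ 2 by rewrite lt0r vpos sqr_ge0.
(* minimize |u + l v|^2 at l = - <u,v> / |v|^2 *)
pose l := - (rdot u v / enorm v ^+ 2).
have := sqr_ge0 (enorm (u + l *: v)).
rewrite sqr_enormD enormZ exprMn real_normK ?num_real //.
have -> : rdot u (l *: v) = l * rdot u v.
  by rewrite /rdot mulr_sumr; apply: eq_bigr => i _; rewrite mxE; ring.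
move=> /(mulr_ge0 (ltW vpos)).
have -> : enorm v ^+ 2 * (enorm u ^+ 2 + 2 * (l * rdot u v) + l ^+ 2 * enorm v ^+ 2)
    = (enorm u * enorm v) ^+ 2 - rdot u v ^+ 2.
  by rewrite /l; field; rewrite -sqrf_eq0 gt_eqF.
rewrite subr_ge0 => h; apply: le_trans (ler_norm _) _.
rewrite -ler_sqr ?nnegrE ?mulr_ge0 ?enorm_ge0 //.
by rewrite real_normK ?num_real.
Qed.

Lemma enormD k (u v : 'rV[R]_k) : enorm (u + v) <= enorm u + enorm v.
Proof.
rewrite -ler_sqr ?nnegrE ?addr_ge0 ?enorm_ge0 // sqr_enormD sqrrD.
by have := rdot_le_enorm u v; lra.
Qed.

Lemma sqr_enorm_subD_le k (u w : 'rV[R]_k) :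
  enorm u ^+ 2 - enorm (u + w) ^+ 2 <= 2 * enorm u * enorm w.
Proof.
have := rdot_le_enorm (- u) w.
have -> : rdot (- u) w = - rdot u w.
  by rewrite /rdot -sumrN; apply: eq_bigr => i _; rewrite mxE mulNr.
by rewrite enormN sqr_enormD; have := sqr_ge0 (enorm w); lra.
Qed.

Lemma enorm_le_mx_norm k (u : 'rV[R]_k) : enorm u <= k%:R * `|u|.
Proof.
have uil i : `|u ord0 i| <= `|u|.
  rewrite [leRHS]/Num.Def.normr /= mx_normrE.
  exact: le_trans (le_bigmax _ _ (ord0, i)).
apply: (@le_trans _ _ (\sum_(i < k) `|u ord0 i|)); last first.
  rewrite -[k in k%:R]card_ord -sum1_card natr_sum mulr_suml.
  by apply: ler_sum => i _; rewrite mul1r.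
have s0 : 0 <= \sum_(i < k) `|u ord0 i| by apply: sumr_ge0.
rewrite -ler_sqr ?nnegrE ?enorm_ge0 // sqr_enorm.
rewrite /index_enum; elim: (Finite.enum _) => [|j r IH]; first by rewrite !big_nil expr0n.
rewrite !big_cons sqrrD -real_normK ?num_real //.
have : 0 <= \sum_(i <- r) `|u ord0 i| by apply: sumr_ge0.
by have := normr_ge0 (u ord0 j); nra.
Qed.

End EuclideanNorm.

Section PositivePart.
Variable R : realType.
Implicit Types (a b t z : R) (k : nat).

Lemma sqr_pospart_sub_le a b :
  Num.max b 0 ^+ 2 - Num.max a 0 ^+ 2 <= 2 * Num.max b 0 * (b - a).
Proof.
have := sqr_ge0 (b - a).
by case: (leP a 0) => ha; case: (leP b 0) => hb; nra.
Qed.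

Lemma sqr_pospart_convex a b t z : 0 <= t <= 1 -> z <= t * a + (1 - t) * b ->
  Num.max z 0 ^+ 2 <= t * Num.max a 0 ^+ 2 + (1 - t) * Num.max b 0 ^+ 2.
Proof.
move=> /andP[t0 t1] hz.
have a0 : 0 <= Num.max a 0 by rewrite le_max lexx orbT.
have b0 : 0 <= Num.max b 0 by rewrite le_max lexx orbT.
have z0 : 0 <= Num.max z 0 by rewrite le_max lexx orbT.
have hm : Num.max z 0 <= t * Num.max a 0 + (1 - t) * Num.max b 0.
  by case: (leP z 0) => hx; case: (leP a 0) => ha; case: (leP b 0) => hb; nra.
have : Num.max z 0 ^+ 2 <= (t * Num.max a 0 + (1 - t) * Num.max b 0) ^+ 2.
  by rewrite ler_pXn2r // ?nnegrE //; nra.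
have : 0 <= t * (1 - t) * (Num.max a 0 - Num.max b 0) ^+ 2.
  by rewrite mulr_ge0 ?sqr_ge0 // mulr_ge0 // subr_ge0.
nra.
Qed.

Lemma sqr_enorm_pospart k (u : 'rV[R]_k) :
  enorm (pospart u) ^+ 2 = \sum_(i < k) Num.max (u ord0 i) 0 ^+ 2.
Proof. by rewrite sqr_enorm; apply: eq_bigr => i _; rewrite mxE. Qed.

Lemma enorm_pospart_le k (u : 'rV[R]_k) : enorm (pospart u) <= enorm u.
Proof.
rewrite /enorm ler_sqrt; last by apply: sumr_ge0 => i _; rewrite sqr_ge0.
by apply: ler_sum => i _; rewrite mxE; case: (leP (u ord0 i) 0) => h; nra.
Qed.

Lemma sqr_enorm_pospart_sub_le k (u v : 'rV[R]_k) :
  enorm (pospart v) ^+ 2 - enorm (pospart u) ^+ 2 <=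
  2 * enorm (pospart v) * enorm (v - u).
Proof.
rewrite !sqr_enorm_pospart -sumrB.
apply: (@le_trans _ _ (2 * rdot (pospart v) (v - u))).
  rewrite /rdot mulr_sumr; apply: ler_sum => i _.
  by rewrite !mxE mulrA sqr_pospart_sub_le.
by rewrite -mulrA ler_pM2l // rdot_le_enorm.
Qed.

Lemma sqr_enorm_pospart_convex k (u v w : 'rV[R]_k) t : 0 <= t <= 1 ->
  (forall i, w ord0 i <= t * u ord0 i + (1 - t) * v ord0 i) ->
  enorm (pospart w) ^+ 2 <=
  t * enorm (pospart u) ^+ 2 + (1 - t) * enorm (pospart v) ^+ 2.
Proof.
move=> t01 hw; rewrite !sqr_enorm_pospart !mulr_sumr -big_split /=.
by apply: ler_sum => i _; exact: sqr_pospart_convex.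
Qed.

End PositivePart.

Section Differentiation.
Variable R : realType.

Lemma differentiable_rV k q (g : 'rV[R]_k -> 'rV[R]_q) z :
  (forall j, differentiable (fun w => g w ord0 j) z) -> differentiable g z.
Proof.
move=> dg; have -> : g = \sum_(j < q) (fun w => g w ord0 j *: 'e_j).
  by rewrite fct_sumE; apply: funext => w; exact: row_sum_delta.
by apply: differentiable_sum => j; apply: differentiableZl.
Qed.

Lemma enorm_diff_quotient_near k q (g : 'rV[R]_k -> 'rV[R]_q) z v eta :
  differentiable g z -> 0 < eta ->
  \forall t \near 0^'+, enorm (g (z + t *: v) - g z) <= t * (enorm ('d g z v) + eta).
Proof.
move=> dg eta0; set w := 'd g z v.
pose quot t := t^-1 *: (g (t *: v + z) - g z).
have eta'0 : 0 < eta / (q%:R + 1) by rewrite divr_gt0 // ltr_wpDl.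
have near_quot : \forall t \near 0^'+, `|w - quot t| <= eta / (q%:R + 1).
  have /cvgrPdist_le /(_ _ eta'0) := diff_derivable (v:=v) dg.
  rewrite -[lim _]/(derive g z v) deriveE // -/w => near_w.
  have : \forall t \near (0 : R), t != 0 -> `|w - quot t| <= eta / (q%:R + 1).
    exact: near_w.
  by apply: filterS => t wt t0; apply: wt; rewrite gt_eqF.
near=> t.
have t0 : 0 < t by near: t; exact: nbhs_right_gt.
have -> : g (z + t *: v) - g z = t *: quot t.
  by rewrite /quot scalerA divff ?gt_eqF // scale1r [t *: v + z]addrC.
rewrite enormZ gtr0_norm // ler_pM2l // -[quot t](addrNK w) addrC.
apply: le_trans (enormD _ _) _; rewrite lerD2l enormB.
apply: le_trans (enorm_le_mx_norm _) _.
have wq : `|w - quot t| <= eta / (q%:R + 1) by near: t.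
apply: le_trans (ler_wpM2l (ler0n _ _) wq) _.
by rewrite mulrA ler_pdivrMr ?ltr_wpDl // mulrDr mulr1 mulrC lerDl ltW.
Unshelve. all: by end_near.
Qed.

Lemma le_of_near0_right (a b K : R) : 0 <= K ->
  (forall eta, 0 < eta -> \forall t \near 0^'+, a * (1 - t) <= b + K * eta) ->
  a <= b.
Proof.
move=> K0 near_ab; apply/ler_addgt0Pr => e e0.
pose s := e / (2 * (K + `|a| + 1)).
have Ka0 : 0 < K + `|a| + 1 by rewrite ltr_wpDl // addr_ge0.
have s0 : 0 < s by rewrite divr_gt0 // mulr_gt0.
have es : e = 2 * (s * (K + `|a| + 1)) by rewrite /s; field; rewrite gt_eqF.
have [t [ab [t0 ts]]] : exists t, a * (1 - t) <= b + K * s /\ 0 < t /\ t < s.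
  apply: (@filter_ex R (0 : R)^'+); near=> t; split; first by near: t; exact: near_ab.
  by split; near: t; [exact: nbhs_right_gt | exact: nbhs_right_lt].
have : a * t <= `|a| * s.
  by apply: le_trans (ler_wpM2r (ltW t0) (ler_norm a)) _; rewrite ler_wpM2l // ltW.
by have := normr_ge0 a; nra.
Unshelve. all: by end_near.
Qed.

End Differentiation.

Lemma joint_row_mx (R : realType) n m T (g : 'rV[R]_n -> 'rV[R]_m -> T) x y :
  joint g (row_mx x y) = g x y.
Proof. by rewrite /joint row_mxKl row_mxKr. Qed.

Lemma enorm_row_mx0 (R : realType) n m (e : 'rV[R]_m) :
  enorm (row_mx (0 : 'rV[R]_n) e) = enorm e.
Proof.
rewrite /enorm big_split_ord /= big1 ?add0r => [|i _]; last first.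
  by rewrite row_mxEl mxE expr0n.
by congr Num.sqrt; apply: eq_bigr => i _; rewrite row_mxEr.
Qed.

Lemma le_div_of_mul_sqr_le (R : realType) (a d L : R) :
  0 < a -> 0 <= L -> a * d ^+ 2 <= L * d -> d <= L / a.
Proof.
move=> a0 L0 adL; rewrite ler_pdivlMr //.
by case: (leP d 0) => d0; nra.
Qed.

Section Maximizers.
Variables (R : realType) (n m p : nat) (X : set 'rV[R]_n) (Y : set 'rV[R]_m).
Variables (f : 'rV[R]_n -> 'rV[R]_m -> R) (c : 'rV[R]_n -> 'rV[R]_m -> 'rV[R]_p).
Variables (M : R) (x : 'rV[R]_n).
Hypothesis hYc : cvx_set Y.
Hypothesis hfc : concave_on Y (f x).
Hypothesis hcc : forall i : 'I_p, convex_on Y (fun y => c x y ord0 i).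

Lemma psi_strongly_concave rho sigma u v t : 0 <= rho -> Y u -> Y v -> 0 <= t <= 1 ->
  t * psi f c rho sigma x u + (1 - t) * psi f c rho sigma x v
    + sigma / 2 * (t * (1 - t)) * enorm (u - v) ^+ 2
  <= psi f c rho sigma x (t *: u + (1 - t) *: v).
Proof.
move=> rho0 Yu Yv t01.
have f_concave := hfc Yu Yv t01.
have pen_convex : enorm (pospart (c x (t *: u + (1 - t) *: v))) ^+ 2 <=
    t * enorm (pospart (c x u)) ^+ 2 + (1 - t) * enorm (pospart (c x v)) ^+ 2.
  by apply: sqr_enorm_pospart_convex => // i; exact: hcc.
have := ler_wpM2l (divr_ge0 rho0 (ler0n R 2)) pen_convex.
by rewrite /psi sqr_enorm_convex; lra.
Qed.

Lemma ystar_shift_gap rho_k sigma_k rho_k1 sigma_k1 y_k y_k1 t :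
  0 <= rho_k -> is_ystar Y f c rho_k sigma_k x y_k ->
  is_ystar Y f c rho_k1 sigma_k1 x y_k1 -> 0 <= t <= 1 ->
  sigma_k * (t * (1 - t)) * enorm (y_k - y_k1) ^+ 2 <=
    (rho_k1 - rho_k) / 2 * (enorm (pospart (c x (y_k1 + t *: (y_k - y_k1)))) ^+ 2
                            - enorm (pospart (c x y_k1)) ^+ 2)
    + (sigma_k - sigma_k1) / 2 *
        (enorm y_k1 ^+ 2 - enorm (y_k1 + t *: (y_k - y_k1)) ^+ 2).
Proof.
move=> rho0 [Yk opt_k] [Yk1 opt_k1] t01.
have -> : y_k1 + t *: (y_k - y_k1) = t *: y_k + (1 - t) *: y_k1.
  by apply/rowP => i; rewrite !mxE; ring.
have near_k := psi_strongly_concave sigma_k rho0 Yk1 Yk t01.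
have le_k := opt_k _ (hYc Yk1 Yk t01).
have at_t := psi_strongly_concave sigma_k rho0 Yk Yk1 t01.
have le_k1 := opt_k1 _ (hYc Yk Yk1 t01).
rewrite enormB in near_k.
move: near_k le_k at_t le_k1; rewrite /psi; lra.
Qed.

Hypothesis hMc : forall y, Y y -> enorm (c x y) <= M.
Hypothesis hMy : forall y, Y y -> enorm y <= M.

Lemma ystar_shift_bound rho_k sigma_k rho_k1 sigma_k1 y_k y_k1 t :
  0 <= rho_k -> rho_k <= rho_k1 -> sigma_k1 <= sigma_k ->
  is_ystar Y f c rho_k sigma_k x y_k -> is_ystar Y f c rho_k1 sigma_k1 x y_k1 ->
  0 <= t <= 1 ->
  sigma_k * (t * (1 - t)) * enorm (y_k - y_k1) ^+ 2 <=
    (rho_k1 - rho_k) * M * enorm (c x (y_k1 + t *: (y_k - y_k1)) - c x y_k1)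
    + (sigma_k - sigma_k1) * M * (t * enorm (y_k - y_k1)).
Proof.
move=> rho0 rho_le sigma_le yk yk1 t01.
have gap := ystar_shift_gap rho0 yk yk1 t01.
move: yk yk1 t01 => [Yk _] [Yk1 _] /andP[t0 t1].
set y_t := y_k1 + t *: (y_k - y_k1) in gap *.
have Yt : Y y_t.
  rewrite (_ : y_t = t *: y_k + (1 - t) *: y_k1); first by apply: hYc => //; apply/andP.
  by apply/rowP => i; rewrite !mxE; ring.
have pen_le : enorm (pospart (c x y_t)) ^+ 2 - enorm (pospart (c x y_k1)) ^+ 2 <=
    2 * M * enorm (c x y_t - c x y_k1).
  apply: le_trans (sqr_enorm_pospart_sub_le _ _) _.
  rewrite ler_wpM2r ?enorm_ge0 // ler_pM2l //.
  exact: le_trans (enorm_pospart_le _) (hMc Yt).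
have reg_le : enorm y_k1 ^+ 2 - enorm y_t ^+ 2 <= 2 * M * (t * enorm (y_k - y_k1)).
  apply: le_trans (sqr_enorm_subD_le _ _) _.
  rewrite enormZ ger0_norm // ler_wpM2r ?mulr_ge0 ?enorm_ge0 // ler_pM2l //.
  exact: hMy.
have drho : 0 <= (rho_k1 - rho_k) / 2 by rewrite divr_ge0 ?subr_ge0.
have dsigma : 0 <= (sigma_k - sigma_k1) / 2 by rewrite divr_ge0 ?subr_ge0.
have := ler_wpM2l drho pen_le; have := ler_wpM2l dsigma reg_le.
lra.
Qed.

Hypothesis hx : X x.
Hypothesis hc : forall i : 'I_p, C11_on (prodset X Y) (joint (fun x y => c x y ord0 i)).
Hypothesis hMJ : forall z, prodset X Y z -> forall v : 'rV[R]_(n + m),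
  enorm ('d (joint c) z v) <= M * enorm v.

Lemma c_shift_near y e eta : Y y -> 0 < eta ->
  \forall t \near 0^'+, enorm (c x (y + t *: e) - c x y) <= t * (M * enorm e + eta).
Proof.
move=> Yy eta0; set z := row_mx x y; set v := row_mx (0 : 'rV[R]_n) e.
have XYz : prodset X Y z by rewrite /prodset /z /= row_mxKl row_mxKr.
have dc : differentiable (joint c) z by apply: differentiable_rV => j; exact: (hc j).1.
have dc_le : enorm ('d (joint c) z v) <= M * enorm e.
  by rewrite -[enorm e](enorm_row_mx0 n) -/v; exact: hMJ.
near=> t.
have t0 : 0 < t by near: t; exact: nbhs_right_gt.
have : enorm (joint c (z + t *: v) - joint c z) <= t * (enorm ('d (joint c) z v) + eta).
  by near: t; exact: enorm_diff_quotient_near.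
rewrite /z /v scale_row_mx scaler0 add_row_mx addr0 !joint_row_mx => le_t.
by apply: le_trans le_t _; rewrite ler_pM2l // lerD2r.
Unshelve. all: by end_near.
Qed.

End Maximizers.

Theorem lemmaD3 (R : realType) (n m p : nat)
  (X : set 'rV[R]_n) (Y : set 'rV[R]_m)
  (f : 'rV[R]_n -> 'rV[R]_m -> R) (c : 'rV[R]_n -> 'rV[R]_m -> 'rV[R]_p)
  (M : R)
  (* X, Y nonempty, convex, compact *)
  (hX0 : X !=set0) (hXc : cvx_set X) (hXk : compact X)
  (hY0 : Y !=set0) (hYc : cvx_set Y) (hYk : compact Y)
  (* f C^1 with Lipschitz gradient on X x Y, concave in y *)
  (hf : C11_on (prodset X Y) (joint f))
  (hfc : forall x, X x -> concave_on Y (f x))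
  (* each c_i C^1 with Lipschitz gradient on X x Y, convex in y *)
  (hc : forall i : 'I_p, C11_on (prodset X Y) (joint (fun x y => c x y ord0 i)))
  (hcc : forall (i : 'I_p) x, X x -> convex_on Y (fun y => c x y ord0 i))
  (* the constant M *)
  (hMc : forall x y, X x -> Y y -> enorm (c x y) <= M)
  (hMJ : forall z, prodset X Y z -> forall v : 'rV[R]_(n + m),
           enorm ('d (joint c) z v) <= M * enorm v)
  (hMy : forall y, Y y -> enorm y <= M)
  (rho_k rho_k1 sigma_k sigma_k1 : R)
  (hrho : 0 < rho_k) (hrho' : rho_k <= rho_k1)
  (hsig : 0 < sigma_k1) (hsig' : sigma_k1 <= sigma_k)
  (x : 'rV[R]_n) (hx : X x)
  (y_k y_k1 : 'rV[R]_m)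
  (hyk : is_ystar Y f c rho_k sigma_k x y_k)
  (hyk1 : is_ystar Y f c rho_k1 sigma_k1 x y_k1) :
  enorm (y_k1 - y_k) <=
    (rho_k1 - rho_k) / sigma_k * M ^+ 2 + (sigma_k - sigma_k1) / sigma_k * M.
Proof.
have M0 : 0 <= M by case: hY0 => y Yy; exact: le_trans (enorm_ge0 y) (hMy y Yy).
have sigma_k0 : 0 < sigma_k by exact: lt_le_trans hsig'.
have drho : 0 <= (rho_k1 - rho_k) * M by rewrite mulr_ge0 ?subr_ge0.
have dsigma : 0 <= (sigma_k - sigma_k1) * M by rewrite mulr_ge0 ?subr_ge0.
rewrite enormB; set d := enorm (y_k - y_k1).
have -> : (rho_k1 - rho_k) / sigma_k * M ^+ 2 + (sigma_k - sigma_k1) / sigma_k * M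
    = ((rho_k1 - rho_k) * M * M + (sigma_k - sigma_k1) * M) / sigma_k.
  by field; rewrite gt_eqF.
apply: le_div_of_mul_sqr_le => //; first by rewrite addr_ge0 // mulr_ge0.
apply: (@le_of_near0_right _ _ _ ((rho_k1 - rho_k) * M)) => // eta eta0.
near=> t.
have t0 : 0 < t by near: t; exact: nbhs_right_gt.
have t01 : 0 <= t <= 1 by rewrite ltW //; near: t; exact/nbhs_right_le/ltr01.
have shift_le := ystar_shift_bound hYc (hfc x hx) (fun i => hcc i x hx)
  (fun y => hMc x y hx) hMy (ltW hrho) hrho' hsig' hyk hyk1 t01.
have c_le : enorm (c x (y_k1 + t *: (y_k - y_k1)) - c x y_k1) <= t * (M * d + eta).
  near: t; apply: (c_shift_near hx hc hMJ) => //; exact: hyk1.1.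
rewrite -(ler_pM2l t0); move: shift_le; rewrite -/d; nra.
Unshelve. all: by end_near.
Qed.
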